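(* For every integer $n\ge0$, the number of walks $0=y_0,y_1,\dots,y_n=2$ with $y_i-y_{i-1}\in\{-2,-1,+1,+2\}$ for all $i$ and $y_i\ge1$ for all $1\le i\le n$ (basketball walks of length $n$ from the origin to altitude $2$ never returning to the $x$-axis) equals $$\frac{1}{2n+1}\sum_{k=0}^{n+1}(-1)^{n+k+1}\binom{2n+1}{n+k}\binom{n+2k-1}{k}.$$
   Context: For integers $a$ and $b$, $\binom ab=a(a-1)\cdots(a-b+1)/b!$ if $b\ge0$ (so $\binom{-1}{0}=1$) and $\binom ab=0$ if $b<0$. *)

From mathcomp Require Import all_boot all_order all_algebra.
Set Implicit Arguments. Unset Strict Implicit. Unset Printing Implicit Defensive.
Import Order.TTheory GRing.Theory Num.Theory.
Local Open Scope ring_scope.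

(* Generalized binomial: for a : int and b >= 0,
   binz a b = a (a-1) ... (a-b+1) / b!  (so binz (-1) 0 = 1). *)
Definition binz (a : int) (b : nat) : rat :=
  (\prod_(i < b) (a - i%:Z)%:~R) / (b`!)%:R.

Definition stepv (c : 'I_4) : int := nth 0 [:: -2; -1; 1; 2] c.

Definition alt (n : nat) (s : {ffun 'I_n -> 'I_4}) (i : nat) : int :=
  \sum_(j < n | (j < i)%N) stepv (s j).

(* Basketball walks of length n from 0 to altitude 2 with y_i >= 1 for 1 <= i <= n,
   encoded by their step sequences (a bijection with the sequences y_0..y_n). *)
Definition bb_walks (n : nat) : {set {ffun 'I_n -> 'I_4}} :=
  [set s | [forall i : 'I_n.+1, (0 < i)%N ==> (1 <= alt s i)] && (alt s n == 2)].

From mathcomp Require Import all_boot all_order all_algebra.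
From mathcomp Require Import ring zify.
Import Order.TTheory GRing.Theory Num.Theory.
Local Open Scope ring_scope.
Set Implicit Arguments. Unset Strict Implicit. Unset Printing Implicit Defensive.

(* Write u for 1/(1+x), represented modulo x^M by the truncated geometric series
   [inv1X M], and let Phi = 1 + x + x^2, Psi = (1 + 2x)(1 - x - x^2), G_(-1) = 0,
   G_0 = 1 and G_(y+1) = x(1+x)(G_y + G_(y-1)).  For n >= 1 the number of walks of
   length n staying at altitude >= 1 and ending at altitude y >= 0 is
   [x^n] G_y Phi^(2n-1) Psi u^(n+1+y): the closed form obeys the step recurrence
   because of a linear identity between consecutive G_y, and it vanishes at
   altitude 0 by Euler's identity [x^N] (x f') = N [x^N] f.  The same identity
   turns the value at altitude 2 into [x^(n+1)] Phi^(2n+1) u^(n+1) divided by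
   2n+1, and expanding Phi = (1 + x)^2 - x binomially gives the sum. *)

Definition eqmodX (R : comNzRingType) (M : nat) (p q : {poly R}) : Prop :=
  exists r, p - q = r * 'X^M.

Notation "p = q %[modX M ]" := (eqmodX M p q)
  (at level 70, q at next level, format "p  =  q  %[modX  M ]") : ring_scope.

Section ModX.

Variables (R : comNzRingType) (M : nat).
Implicit Types p q r : {poly R}.

Lemma eqmodX_refl p : p = p %[modX M].
Proof. by exists 0; rewrite subrr mul0r. Qed.

Lemma eqmodX_eq p q : p = q -> p = q %[modX M].
Proof. by move=> ->; apply: eqmodX_refl. Qed.

Lemma eqmodX_sym p q : p = q %[modX M] -> q = p %[modX M].
Proof. by case=> r h; exists (- r); rewrite mulNr -h opprB. Qed.

Lemma eqmodX_trans q p r : p = q %[modX M] -> q = r %[modX M] -> p = r %[modX M].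
Proof.
by case=> r1 h1 [r2 h2]; exists (r1 + r2); rewrite mulrDl -h1 -h2 addrA subrK.
Qed.

Lemma eqmodXD p q p' q' :
  p = q %[modX M] -> p' = q' %[modX M] -> p + p' = q + q' %[modX M].
Proof. by case=> r1 h1 [r2 h2]; exists (r1 + r2); rewrite mulrDl -h1 -h2; ring. Qed.

Lemma eqmodXN p q : p = q %[modX M] -> - p = - q %[modX M].
Proof. by case=> r h; exists (- r); rewrite mulNr -h; ring. Qed.

Lemma eqmodXB p q p' q' :
  p = q %[modX M] -> p' = q' %[modX M] -> p - p' = q - q' %[modX M].
Proof. by move=> h h'; apply/eqmodXD/eqmodXN. Qed.

Lemma eqmodXMn p q k : p = q %[modX M] -> p *+ k = q *+ k %[modX M].
Proof. by case=> r h; exists (r *+ k); rewrite -mulrnBl h mulrnAl. Qed.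

Lemma eqmodXMl r p q : p = q %[modX M] -> r * p = r * q %[modX M].
Proof. by case=> s h; exists (r * s); rewrite -mulrA -h; ring. Qed.

Lemma eqmodXMr r p q : p = q %[modX M] -> p * r = q * r %[modX M].
Proof. by rewrite ![_ * r]mulrC; apply: eqmodXMl. Qed.

Lemma eqmodXM p q p' q' :
  p = q %[modX M] -> p' = q' %[modX M] -> p * p' = q * q' %[modX M].
Proof. by move=> h h'; apply: (eqmodX_trans (eqmodXMr p' h)); apply: eqmodXMl. Qed.

Lemma eqmodXX p q k : p = q %[modX M] -> p ^+ k = q ^+ k %[modX M].
Proof.
move=> h; elim: k => [|k ih]; first exact: eqmodX_refl.
by rewrite !exprS; apply: eqmodXM.
Qed.

Lemma coef_eqmodX p q k : p = q %[modX M] -> (k < M)%N -> p`_k = q`_k.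
Proof.
case=> r h kM; have -> : p = q + r * 'X^M by rewrite -h; ring.
by rewrite coefD coefMXn kM addr0.
Qed.

Lemma eqmodX_leq N p q : (N <= M)%N -> p = q %[modX M] -> p = q %[modX N].
Proof.
by move=> le [r h]; exists (r * 'X^(M - N)); rewrite h -mulrA -exprD subnK.
Qed.

End ModX.

Section InverseOnePlusX.

Variable R : comNzRingType.
Implicit Types p q P : {poly R}.

Definition inv1X (M : nat) : {poly R} := \sum_(i < M) (- 'X) ^+ i.

Lemma mul1X_inv1X M : (1 + 'X) * inv1X M = 1 - (- 'X) ^+ M.
Proof.
elim: M => [|M ih]; first by rewrite /inv1X big_ord0 expr0; ring.
by rewrite /inv1X big_ord_recr /= mulrDr -/(inv1X M) ih exprS; ring.
Qed.

Lemma inv1XK M : (1 + 'X) * inv1X M = 1 %[modX M].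
Proof. by exists (- (-1) ^+ M); rewrite mul1X_inv1X (exprNn 'X); ring. Qed.

Lemma eqmodX_inv1X M p q j :
  p * ((1 + 'X) ^+ j * inv1X M ^+ j) * q = p * q %[modX M].
Proof.
have := eqmodXX j (inv1XK M); rewrite expr1n exprMn => /(eqmodXMl p)/(eqmodXMr q).
by rewrite mulr1.
Qed.

Lemma inv1X_leq M N : (M <= N)%N -> inv1X N = inv1X M %[modX M].
Proof.
move=> le; apply: (@eqmodX_trans _ _ (inv1X N * ((1 + 'X) * inv1X M))).
  by rewrite -[X in X = _ %[modX _]]mulr1; apply/eqmodXMl/eqmodX_sym/inv1XK.
rewrite mulrA [_ * (1 + 'X)]mulrC -[X in _ = X %[modX _]]mul1r.
by apply/eqmodXMr/(eqmodX_leq le)/inv1XK.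
Qed.

Lemma Xderiv_inv1X M : 'X * (inv1X M)^`() = - ('X * inv1X M ^+ 2) %[modX M].
Proof.
have XderivXN : 'X * ((- 'X) ^+ M)^`() = (- 'X) ^+ M *+ M :> {poly R}.
  case: M => [|m]; first by rewrite expr0 derivC mulr0 mulr0n.
  by rewrite deriv_exp derivN derivX exprS mulrnAr; congr (_ *+ _); ring.
have dmul : 'X * inv1X M + (1 + 'X) * ('X * (inv1X M)^`()) = 0 %[modX M].
  have e : 'X * inv1X M + (1 + 'X) * ('X * (inv1X M)^`()) = - ((- 'X) ^+ M *+ M).
    have := congr1 (fun p => 'X * p^`()) (mul1X_inv1X M).
    rewrite /= derivM derivD derivC derivX derivB derivC sub0r mulrN XderivXN => <-.
    by ring.
  by exists (- ((-1) ^+ M *+ M)); rewrite e (exprNn 'X) subr0 -mulrnAl; ring.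
set u := inv1X M in dmul *; set D := 'X * u^`() in dmul *.
apply: (@eqmodX_trans _ _ ((1 + 'X) * u * D)).
  by rewrite -{1}[D]mul1r; apply/eqmodXMr/eqmodX_sym/inv1XK.
rewrite (_ : _ * D = u * ('X * u + (1 + 'X) * D) - 'X * u ^+ 2); last by ring.
by rewrite -[X in _ = X %[modX _]]add0r -(mulr0 u); apply/eqmodXB/eqmodX_refl/eqmodXMl.
Qed.

Lemma coef_Xderiv p N : ('X * p^`())`_N = p`_N *+ N.
Proof.
by rewrite coefXM; case: N => [|N] /=; rewrite ?mulr0n ?coef_deriv.
Qed.

Lemma coef_Xderiv_inv1X M P k N : (N < M)%N ->
  (P * inv1X M ^+ k)`_N *+ N =
  ('X * P^`() * inv1X M ^+ k - ('X * P * inv1X M ^+ k.+1) *+ k)`_N.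
Proof.
move=> NM; rewrite -coef_Xderiv; apply: coef_eqmodX NM.
set u := inv1X M.
have Xderiv_pow : 'X * (P * (u ^+ k)^`()) = - ('X * P * u ^+ k.+1) *+ k %[modX M].
  case: k => [|k]; first by rewrite derivC !mulr0 mulr0n; apply: eqmodX_refl.
  apply: (@eqmodX_trans _ _ (u ^+ k *+ k.+1 * (P * ('X * u^`())))).
    by apply: eqmodX_eq; rewrite deriv_exp; ring.
  apply: (@eqmodX_trans _ _ (u ^+ k *+ k.+1 * (P * - ('X * u ^+ 2)))).
    exact/eqmodXMl/eqmodXMl/Xderiv_inv1X.
  by apply: eqmodX_eq; rewrite mulrnAl; congr (_ *+ _); rewrite !exprS; ring.
rewrite derivM mulrDr; apply: (eqmodX_trans (eqmodXD (eqmodX_refl _ _) Xderiv_pow)).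
by apply: eqmodX_eq; ring.
Qed.

Lemma coef_1Xn k j : ((1 + 'X : {poly R}) ^+ k)`_j = ('C(k, j))%:R.
Proof.
elim: k j => [|k IH] j; first by rewrite expr0 coef1; case: j.
rewrite exprS mulrDl mul1r coefD coefXM IH.
by case: j => [|j] /=; rewrite ?bin0 ?addr0 // IH binS natrD addrC.
Qed.

End InverseOnePlusX.

Arguments inv1X {R} M.

Definition walks (n : nat) (y : int) : {set {ffun 'I_n -> 'I_4}} :=
  [set s | [forall i : 'I_n.+1, (0 < i)%N ==> (1 <= alt s i)] && (alt s n == y)].

Section LastStep.

Variable n : nat.
Implicit Types (s : {ffun 'I_n -> 'I_4}) (t : {ffun 'I_n.+1 -> 'I_4}) (d : 'I_4).

Definition snoc_step (sd : {ffun 'I_n -> 'I_4} * 'I_4) : {ffun 'I_n.+1 -> 'I_4} :=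
  [ffun i => if unlift ord_max i is Some j then sd.1 j else sd.2].

Definition unsnoc_step t : {ffun 'I_n -> 'I_4} * 'I_4 :=
  ([ffun j => t (lift ord_max j)], t ord_max).

Lemma unsnoc_stepK : cancel unsnoc_step snoc_step.
Proof.
move=> t; apply/ffunP => i; rewrite ffunE /=.
by case: (unliftP ord_max i) => [j ->|->]; rewrite ?ffunE.
Qed.

Lemma snoc_stepK : cancel snoc_step unsnoc_step.
Proof.
case=> s d; rewrite /unsnoc_step /=; congr (_, _).
  by apply/ffunP => j; rewrite !ffunE liftK.
by rewrite ffunE unlift_none.
Qed.

Lemma alt_snoc_step s d i :
  alt (snoc_step (s, d)) i = alt s i + (if (n < i)%N then stepv d else 0).
Proof.
rewrite /alt big_mkcond big_ord_recr /= [in RHS]big_mkcond /= ffunE unlift_none.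
congr (_ + _); apply: eq_bigr => j _.
have -> : widen_ord (leqnSn n) j = lift ord_max j.
  by apply: val_inj; rewrite /= /bump leqNgt ltn_ord.
by rewrite ffunE liftK.
Qed.

Lemma alt_final s i : (n <= i)%N -> alt s i = alt s n.
Proof.
by move=> ni; apply: eq_bigl => j; rewrite (leq_trans (ltn_ord j) ni) ltn_ord.
Qed.

Lemma snoc_step_walks s d y :
  (snoc_step (s, d) \in walks n.+1 y) = (1 <= y) && (s \in walks n (y - stepv d)).
Proof.
rewrite !inE alt_snoc_step ltnSn (alt_final s (leqnSn n)).
apply/idP/idP.
- case/andP => /forallP pos /eqP ey.
  have := pos ord_max; rewrite /= alt_snoc_step ltnSn (alt_final s (leqnSn n)) ey => ->.
  rewrite -ey addrK eqxx andbT; apply/forallP => i; apply/implyP => i0.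
  have := pos (widen_ord (leqnSn _) i); rewrite /= i0 alt_snoc_step.
  by rewrite ltnNge -ltnS ltn_ord addr0.
- case/andP => y1 /andP [/forallP pos /eqP ey].
  rewrite ey subrK eqxx andbT; apply/forallP => i; apply/implyP => i0.
  rewrite alt_snoc_step; case: (ltnP n i) => ni.
    by rewrite (alt_final s (ltnW ni)) ey subrK.
  by have := pos (Ordinal (ni : (i < n.+1)%N)); rewrite /= i0 addr0.
Qed.

Lemma card_walksS y : #|walks n.+1 y| =
  if 1 <= y then (\sum_(d : 'I_4) #|walks n (y - stepv d)|)%N else 0%N.
Proof.
rewrite -sum1_card (reindex snoc_step) /=; last first.
  by apply: onW_bij; exists unsnoc_step; [exact: snoc_stepK | exact: unsnoc_stepK].
rewrite big_mkcond /= -(pair_bigA _ (fun s d => (snoc_step (s, d) \in walks n.+1 y) : nat)).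
under eq_bigr => s _ do under eq_bigr => d _ do rewrite snoc_step_walks.
case: (1 <= y); last by rewrite big1 // => s _; rewrite big1.
by rewrite exchange_big; apply: eq_bigr => d _; rewrite -big_mkcond sum1_card.
Qed.

End LastStep.

Lemma card_walks0 y : #|walks 0 y| = (y == 0).
Proof.
have alt0 (s : {ffun 'I_0 -> 'I_4}) : alt s 0 = 0 by rewrite /alt big_ord0.
have [-> | y_neq0] := eqVneq y 0.
  transitivity #|{ffun 'I_0 -> 'I_4}|; last by rewrite card_ffun !card_ord.
  apply: eq_card => s.
  by rewrite !inE alt0 eqxx andbT; apply/forallP => -[[]].
apply/eqP; rewrite cards_eq0 -subset0; apply/subsetP => s.
by rewrite !inE alt0 eq_sym (negbTE y_neq0) andbF.
Qed.

Lemma card_walks_le0 n y : y <= 0 -> #|walks n.+1 y| = 0%N.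
Proof. by move=> y_le0; rewrite card_walksS; case: ifP => // /le_trans/(_ y_le0). Qed.

Lemma sum_steps (F : int -> nat) :
  (\sum_(d : 'I_4) F (stepv d) = F (-2)%R + F (-1)%R + F 1%R + F 2%R)%N.
Proof. by rewrite !big_ord_recr big_ord0 /= add0n. Qed.

Definition Phi : {poly rat} := 1 + 'X + 'X^2.
Definition Psi : {poly rat} := (1 + 'X *+ 2) * (1 - 'X - 'X^2).

Fixpoint G (y : nat) : {poly rat} :=
  if y is y'.+1 then 'X * (1 + 'X) * (G y' + if y' is y''.+1 then G y'' else 0)
  else 1.

Definition Gpred (y : nat) : {poly rat} := if y is y'.+1 then G y' else 0.

Lemma GS y : G y.+1 = 'X * (1 + 'X) * (G y + Gpred y).
Proof. by case: y. Qed.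

Lemma GpredS y : Gpred y.+1 = G y.
Proof. by []. Qed.

Lemma G_step y :
  G y.+1 * Phi ^+ 2 * (1 + 'X) =
  'X * (Gpred y * (1 + 'X) ^+ 4 + G y * (1 + 'X) ^+ 3 + G y.+2 * (1 + 'X) + G y.+3).
Proof.
apply/eqP; rewrite -subr_eq0; apply/eqP; move: y.
pose E y := G y.+1 * Phi ^+ 2 * (1 + 'X) -
  'X * (Gpred y * (1 + 'X) ^+ 4 + G y * (1 + 'X) ^+ 3 + G y.+2 * (1 + 'X) + G y.+3).
have E_rec y : E y.+2 = 'X * (1 + 'X) * (E y.+1 + E y).
  by rewrite /E !(GpredS, GS); ring.
suff E0 y : E y = 0 /\ E y.+1 = 0 by move=> y; case: (E0 y).
elim: y => [|y [E0 E1]]; first by split; rewrite /E /= /Phi; ring.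
by rewrite E_rec E0 E1 addr0 mulr0.
Qed.

Lemma derivPhi : Phi^`() = 1 + 'X *+ 2.
Proof. by rewrite /Phi !derivD derivC derivX derivXn /= add0r. Qed.

(* Euler's identity for f = Phi^(2m+2) u^(m+1): the derivative terms collapse to
   (m+1) Phi^(2m+1) Psi u^(m+2), which is where Psi comes from. *)
Lemma coef_Phi_Psi_inv1X m M : (m.+1 < M)%N ->
  (Phi ^+ m.*2.+1 * Psi * inv1X M ^+ m.+2)`_m.+1 = 0.
Proof.
move=> mM; set u := inv1X M; set W := Phi ^+ m.*2.+1.
have := coef_Xderiv_inv1X (Phi ^+ m.*2.+2) m.+1 mM.
rewrite deriv_exp derivPhi -/u -/W exprS -/W => /eqP; rewrite -subr_eq0 -coefMn -coefB.
set Q := W * (Phi - 'X * (1 + 'X *+ 2) *+ 2) *+ m.+1.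
have -> : Phi * W * u ^+ m.+1 *+ m.+1 -
    ('X * ((1 + 'X *+ 2) * W *+ m.*2.+2) * u ^+ m.+1 - 'X * (Phi * W) * u ^+ m.+2 *+ m.+1)
    = Q * u ^+ m.+1 + ('X * Phi * W * u ^+ m.+2) *+ m.+1.
  by rewrite /Q -doubleS -muln2 mulrnA; ring.
have Psi_eq : Q * u ^+ m.+1 + ('X * Phi * W * u ^+ m.+2) *+ m.+1 =
    (W * Psi * u ^+ m.+2) *+ m.+1 %[modX M].
  apply: (@eqmodX_trans _ _ (Q * ((1 + 'X) ^+ 1 * u ^+ 1) * u ^+ m.+1
                             + ('X * Phi * W * u ^+ m.+2) *+ m.+1)).
    exact/eqmodXD/eqmodX_refl/eqmodX_sym/eqmodX_inv1X.
  by apply: eqmodX_eq; rewrite /Q /Psi /Phi !exprS; ring.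
rewrite (coef_eqmodX Psi_eq mM) coefMn -mulr_natr mulf_eq0 pnatr_eq0 orbF.
by move/eqP.
Qed.

Definition walk_coef (n y : nat) : rat :=
  (G y * Phi ^+ n.*2.-1 * Psi * inv1X n.+2 ^+ (n.+1 + y))`_n.

Lemma walk_coefE M n y : (n < M)%N ->
  walk_coef n y = (G y * Phi ^+ n.*2.-1 * Psi * inv1X M ^+ (n.+1 + y))`_n.
Proof.
move=> nM; rewrite /walk_coef; case: (leqP n.+2 M) => M_n.
  apply: (@coef_eqmodX _ n.+2 _ _ _ _ (leqW (ltnSn n))).
  exact/eqmodXMl/eqmodXX/eqmodX_sym/inv1X_leq.
by apply: (coef_eqmodX _ nM); apply/eqmodXMl/eqmodXX/inv1X_leq/ltnW.
Qed.

Lemma walk_coef0 m : walk_coef m.+1 0 = 0.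
Proof. by rewrite /walk_coef doubleS /= mul1r addn0 coef_Phi_Psi_inv1X. Qed.

Lemma walk_coef1 y : walk_coef 1 y.+1 = (y < 2)%:R.
Proof.
have G0 k : (G k).[0] = (k == 0)%:R.
  by case: k => [|k]; rewrite ?hornerC // GS !hornerM hornerX !mul0r.
have Gpred0 k : (Gpred k).[0] = (k == 1)%:R by case: k => [|k]; rewrite /= ?horner0 ?G0.
have u0 : (inv1X 3 : {poly rat}).[0] = 1.
  by rewrite /inv1X !big_ord_recr big_ord0 /= !hornerE; ring.
rewrite /walk_coef GS; set U := inv1X 3 ^+ _.
rewrite -!mulrA coefXM -horner_coef0 5!hornerM /U !horner_exp u0 expr1n /Phi.
rewrite !(hornerD, hornerN, hornerX, hornerC, hornerMn, hornerXn) G0 Gpred0.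
by case: y {U} => [|[|y]]; rewrite /=; ring.
Qed.

(* G_step times Phi^(2m+1) Psi u^(m+y+5), after cancelling powers of (1+x) u. *)
Lemma walk_coefS m y : walk_coef m.+2 y.+1 =
  walk_coef m.+1 y.+3 + walk_coef m.+1 y.+2 + walk_coef m.+1 y +
  (if y is y'.+1 then walk_coef m.+1 y' else 0).
Proof.
pose u : {poly rat} := inv1X m.+3; pose W := Phi ^+ m.*2.+1; pose U := u ^+ (m + y + 1).
have coefE k c : (m.+2 + k = m + y + 1 + c)%N ->
    walk_coef m.+1 k = (G k * W * Psi * (U * u ^+ c))`_m.+1.
  by move=> e; rewrite (walk_coefE _ (ltnW (ltnSn _))) e exprD doubleS.
have -> : (if y is y'.+1 then walk_coef m.+1 y' else 0) =
    (Gpred y * W * Psi * (U * u ^+ 0))`_m.+1.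
  by case: y @U coefE => [|y'] U coefE; rewrite ?mul0r ?coef0 // (coefE y' 0) //; lia.
rewrite (coefE y.+3 4) ?(coefE y.+2 3) ?(coefE y 1); try lia.
rewrite (walk_coefE _ (ltnSn _)) -/u (_ : (m.+2).*2.-1 = 2 + m.*2.+1)%N ?doubleS //.
rewrite exprD -/W (_ : (m.+3 + y.+1 = m + y + 1 + 3)%N); last lia.
rewrite [u ^+ (_ + 3)]exprD -/U.
set S := G y.+3 * W * Psi * (U * u ^+ 4) + G y.+2 * W * Psi * (U * u ^+ 3)
   + G y * W * Psi * (U * u ^+ 1) + Gpred y * W * Psi * (U * u ^+ 0).
suff step : G y.+1 * (Phi ^+ 2 * W) * Psi * (U * u ^+ 3) = 'X * S %[modX m.+3].
  by rewrite (coef_eqmodX step (ltnSn _)) coefXM /S !coefD.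
apply: (@eqmodX_trans _ _ (G y.+1 * Phi ^+ 2 * (1 + 'X) * W * Psi * (U * u ^+ 4))).
  apply: eqmodX_sym; apply: (eqmodX_trans _ (eqmodX_inv1X _ _ _ 1)).
  by apply: eqmodX_eq; rewrite !exprS; ring.
rewrite G_step.
apply: (@eqmodX_trans _ _ ('X * (G y.+3 * W * Psi * (U * u ^+ 4)
   + G y.+2 * W * Psi * ((1 + 'X) ^+ 1 * u ^+ 1) * (U * u ^+ 3)
   + G y * W * Psi * ((1 + 'X) ^+ 3 * u ^+ 3) * (U * u ^+ 1)
   + Gpred y * W * Psi * ((1 + 'X) ^+ 4 * u ^+ 4) * (U * u ^+ 0)))).
  by apply: eqmodX_eq; ring.
by apply/eqmodXMl/eqmodXD/eqmodX_inv1X/eqmodXD/eqmodX_inv1X/eqmodXD/eqmodX_inv1X/eqmodX_refl.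
Qed.

Lemma card_walks_coef m (y : nat) : (#|walks m.+1 y|)%:R = walk_coef m.+1 y.
Proof.
elim: m y => [|m IH] [|y]; try by rewrite card_walks_le0 ?walk_coef0.
- rewrite card_walksS /= (sum_steps (fun z => #|walks 0 (y.+1%:Z - z)|)) walk_coef1.
  have e1 : y.+1%:Z - -2 = y.+3 by lia.
  have e2 : y.+1%:Z - -1 = y.+2 by lia.
  have e3 : y.+1%:Z - 1 = y by lia.
  have e4 : y.+1%:Z - 2 = y%:Z - 1 by lia.
  rewrite e1 e2 e3 e4 !card_walks0 {e1 e2 e3 e4}.
  have -> : (y%:Z - 1 == 0) = (y == 1)%N by lia.
  by case: y => [|[|y]].
- rewrite card_walksS /= (sum_steps (fun z => #|walks m.+1 (y.+1%:Z - z)|)).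
  have e1 : y.+1%:Z - -2 = y.+3 by lia.
  have e2 : y.+1%:Z - -1 = y.+2 by lia.
  have e3 : y.+1%:Z - 1 = y by lia.
  rewrite e1 e2 e3 walk_coefS !natrD !IH {e1 e2 e3}.
  case: y => [|y]; first by rewrite card_walks_le0.
  by rewrite (_ : y.+2%:Z - 2 = y) ?IH //; lia.
Qed.

(* Euler's identity for f = x^2 Phi^(2m+3) u^(m+2), combined with the vanishing
   coefficient coef_Phi_Psi_inv1X at m+1. *)
Lemma walk_coef2 m :
  walk_coef m.+1 2 *+ m.*2.+3 = (Phi ^+ m.*2.+3 * inv1X m.+3 ^+ m.+2)`_m.+2.
Proof.
pose u : {poly rat} := inv1X m.+3; pose W := Phi ^+ m.*2.+1; pose V := u ^+ m.+2.
have PhiW : Phi ^+ m.*2.+3 = Phi ^+ 2 * W by rewrite -exprD.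
pose L := 'X * ('X * (1 + 'X) * Phi) * W * Psi * (V * u ^+ 2).
have -> : walk_coef m.+1 2 = L`_m.+2.
  rewrite (walk_coefE _ (ltnW (ltnSn _))) -/u -/W.
  rewrite (_ : L = 'X * (G 2 * W * Psi * u ^+ (m.+2 + 2))) ?coefXM //.
  by rewrite /L exprD -/V /= /Phi; ring.
pose P := 'X^2 * (Phi ^+ 2 * W).
have dP : P^`() = 'X *+ 2 * (Phi ^+ 2 * W) + 'X^2 * ((1 + 'X *+ 2) * (Phi * W) *+ m.*2.+3).
  by rewrite /P -PhiW derivM derivXn deriv_exp derivPhi /W -exprS.
have euler := coef_Xderiv_inv1X P m.+2 (ltnSn m.+2).
rewrite -/u -/V exprSr -/V in euler.
have boundary := coef_Phi_Psi_inv1X (ltnSn m.+2).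
rewrite -/u doubleS PhiW (exprSr u) -/V in boundary.
set D1 := (P * V) *+ m.+2 - ('X * P^`() * V - ('X * P * (V * u)) *+ m.+2).
set D2 := Phi ^+ 2 * W * Psi * (V * u).
have key : L *+ m.*2.+3 - Phi ^+ 2 * W * V = D1 *+ 2 - D2 %[modX m.+3].
  apply: (@eqmodX_trans _ _ (L *+ m.*2.+3 - Phi ^+ 2 * W * ((1 + 'X) ^+ 2 * u ^+ 2) * V)).
    exact/eqmodXB/eqmodX_sym/eqmodX_inv1X/eqmodX_refl.
  apply: (@eqmodX_trans _ _ (((P * ((1 + 'X) ^+ 2 * u ^+ 2) * V) *+ m.+2
       - ('X * P^`() * ((1 + 'X) ^+ 2 * u ^+ 2) * V
          - ('X * P * ((1 + 'X) ^+ 1 * u ^+ 1) * (V * u)) *+ m.+2)) *+ 2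
       - Phi ^+ 2 * W * Psi * ((1 + 'X) ^+ 1 * u ^+ 1) * (V * u))).
    by apply: eqmodX_eq; rewrite dP /L /P -!muln2 /Phi /Psi; ring.
  apply/eqmodXB/eqmodX_inv1X/eqmodXMn/eqmodXB/eqmodXB/eqmodXMn/eqmodX_inv1X.
    exact/eqmodXMn/eqmodX_inv1X.
  exact: eqmodX_inv1X.
have := coef_eqmodX key (ltnSn m.+2).
have D1_0 : D1`_m.+2 = 0 by rewrite /D1 coefB coefMn euler subrr.
rewrite PhiW !coefB !coefMn D1_0 /D2 boundary mul0rn subr0 => /eqP.
by rewrite subr_eq0 => /eqP.
Qed.




Lemma coef_Phi_inv1X m : (Phi ^+ m.*2.+3 * inv1X m.+3 ^+ m.+2)`_m.+2 =
  \sum_(0 <= k < m.+3)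
    (-1) ^+ (m.+1 + k + 1) * ('C(m.*2.+3, m.+1 + k))%:R * ('C(m + 2 * k, k))%:R.
Proof.
set K := m.*2.+3; pose u : {poly rat} := inv1X m.+3; pose U := u ^+ m.+2.
pose c i := if (i < m.+1)%N then 0
            else (-1) ^+ (K - i) * 'C(K, i)%:R * 'C(i.*2 - m.+2, i - m.+1)%:R : rat.
have termE i : (i <= K)%N ->
    ((- 'X) ^+ (K - i) * ((1 + 'X) ^+ 2) ^+ i *+ 'C(K, i) * U)`_m.+2 = c i.
  move=> iK.
  have -> : (- 'X) ^+ (K - i) * ((1 + 'X) ^+ 2) ^+ i *+ 'C(K, i) * U =
      (((-1) ^+ (K - i))%:P * ('X^(K - i) * ((1 + 'X) ^+ i.*2 * U))) *+ 'C(K, i).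
    by rewrite rmorph_sign (exprNn 'X) -mul2n exprM; ring.
  rewrite coefMn coefCM coefXnM /c (_ : (m.+2 < K - i)%N = (i < m.+1)%N); last lia.
  case: ifP => [_ | i_ge]; first by rewrite mulr0 mul0rn.
  have reduce : (1 + 'X) ^+ i.*2 * U = (1 + 'X) ^+ (i.*2 - m.+2) %[modX m.+3].
    have := eqmodX_inv1X m.+3 ((1 + 'X : {poly rat}) ^+ (i.*2 - m.+2)) 1 m.+2.
    by rewrite !mulr1 mulrA -exprD subnK //; lia.
  rewrite (coef_eqmodX reduce) ?coef_1Xn; last lia.
  rewrite (_ : (m.+2 - (K - i) = i - m.+1)%N); last lia.
  by rewrite -mulr_natr; ring.
rewrite (_ : Phi = - 'X + (1 + 'X) ^+ 2); last by rewrite /Phi; ring.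
rewrite exprDn big_distrl coef_sum -/u -/U.
rewrite (eq_bigr (fun i : 'I_K.+1 => c i)) => [|i _]; last by apply: termE; rewrite -ltnS.
rewrite -(big_mkord xpredT c) (@big_cat_nat _ _ _ m.+1) //=; last by rewrite /K; lia.
rewrite [X in X + _]big_nat_cond big1 ?add0r; last first.
  by move=> i /andP [/andP [_ i_lt] _]; rewrite /c i_lt.
rewrite -{1}(add0n m.+1) big_addn (_ : (K.+1 - m.+1 = m.+3)%N); last by rewrite /K; lia.
apply: eq_big_nat => k /andP [_ k_lt]; rewrite /c ltnNge leq_addl /= addnK addnC.
rewrite (_ : ((m.+1 + k).*2 - m.+2 = m + 2 * k)%N); last lia.
rewrite (_ : (m.+1 + k + 1 = (K - (m.+1 + k)) + k.*2)%N); last by rewrite /K; lia.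
by rewrite exprD -muln2 exprM sqrr_sign mulr1.
Qed.

Lemma binz_nat (a k : nat) : binz a k = ('C(a, k))%:R.
Proof.
have ffactE : \prod_(i < k) (a%:Z - i%:Z)%:~R = (a ^_ k)%:R :> rat.
  elim: k => [|k IH]; first by rewrite big_ord0 ffactn0.
  rewrite big_ord_recr /= IH ffactnSr natrM.
  by case: (leqP k a) => ka; [rewrite subzn | rewrite ffact_small // !mul0r].
by rewrite /binz ffactE -bin_ffact natrM mulfK // pnatr_eq0 -lt0n fact_gt0.
Qed.

Theorem proposition3p6 (n : nat) :
  (#|bb_walks n|)%:R =
  ((2 * n + 1)%N%:R)^-1 *
    \sum_(0 <= k < n.+2)
      (-1) ^+ (n + k + 1) * ('C(2 * n + 1, n + k))%:R
        * binz (n%:Z + (2 * k)%:Z - 1) k :> rat.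
Proof.
case: n => [|m].
  rewrite (_ : bb_walks 0 = walks 0 2) // card_walks0 big_mkord !big_ord_recr big_ord0 /=.
  by rewrite /binz !big_ord0 big_ord1 (_ : 0%Z + (2 * 1)%N - 1 - 0%Z = 1) //=.
rewrite (_ : bb_walks m.+1 = walks m.+1 2) // card_walks_coef.
rewrite (_ : (2 * m.+1 + 1 = m.*2.+3)%N); last lia.
have binzE k : binz (m.+1%:Z + (2 * k)%:Z - 1) k = ('C(m + 2 * k, k))%:R.
  by rewrite -binz_nat; congr binz; lia.
under eq_bigr => k _ do rewrite binzE.
by rewrite -coef_Phi_inv1X -walk_coef2 -(mulr_natl (walk_coef m.+1 2)) mulKf // pnatr_eq0.
Qed.
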